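(* Let $D$ be a weak bialgebra with a weak projection $(D,B,f,g)$ onto the weak Hopf algebra $B$ with antipode $\lambda_B$, and let $\phi_D=\mu_D\circ(D\otimes f)$. Then the morphism $t_B^D=\phi_D\circ(D\otimes(\lambda_B\circ g))\circ\delta_D:D\rightarrow D$ is idempotent, and if $p_B^D:D\rightarrow D^B$, $i_B^D:D^B\rightarrow D$ is a splitting of $t_B^D$ (i.e. $t_B^D=i_B^D\circ p_B^D$, $p_B^D\circ i_B^D=id_{D^B}$), then $p_B^D$ is a coequalizer of the pair of morphisms $\phi_D,\beta_D:D\otimes B\rightarrow D$, where $\beta_D=(D\otimes(\varepsilon_D\circ\phi_D))\circ(\delta_D\otimes B)$.
   Context: $\mathcal C$ is a strict braided monoidal category with tensor product $\otimes$, unit object $K$ and braiding $c$, in which every idempotent splits. Algebras have unit $\eta$ and product $\mu$; coalgebras counit $\varepsilon$ and coproduct $\delta$; $f\wedge g=\mu\circ(f\otimes g)\circ\delta$. A weak bialgebra is an algebra and coalgebra $D$ with $\delta_D\circ\mu_D=(\mu_D\otimes\mu_D)\circ(D\otimes c_{D,D}\otimes D)\circ(\delta_D\otimes\delta_D)$; $\varepsilon_D\circ\mu_D\circ(\mu_D\otimes D)=((\varepsilon_D\circ\mu_D)\otimes(\varepsilon_D\circ\mu_D))\circ(D\otimes\delta_D\otimes D)=((\varepsilon_D\circ\mu_D)\otimes(\varepsilon_D\circ\mu_D))\circ(D\otimes(c_{D,D}^{-1}\circ\delta_D)\otimes D)$; $(\delta_D\otimes D)\circ\delta_D\circ\eta_D=(D\otimes\mu_D\otimes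 D)\circ((\delta_D\circ\eta_D)\otimes(\delta_D\circ\eta_D))=(D\otimes(\mu_D\circ c_{D,D}^{-1})\otimes D)\circ((\delta_D\circ\eta_D)\otimes(\delta_D\circ\eta_D))$. It is a weak Hopf algebra if there is $\lambda_D:D\rightarrow D$ (antipode) with $id_D\wedge\lambda_D=\Pi_D^L$, $\lambda_D\wedge id_D=\Pi_D^R$, $\lambda_D\wedge id_D\wedge\lambda_D=\lambda_D$, where $\Pi_D^L=((\varepsilon_D\circ\mu_D)\otimes D)\circ(D\otimes c_{D,D})\circ((\delta_D\circ\eta_D)\otimes D)$ and $\Pi_D^R=(D\otimes(\varepsilon_D\circ\mu_D))\circ(c_{D,D}\otimes D)\circ(D\otimes(\delta_D\circ\eta_D))$. A morphism of weak bialgebras is a morphism that is both an algebra and a coalgebra morphism. Weak projection: $D$ a weak bialgebra, $B$ a weak Hopf algebra, $f:B\rightarrow D$ a morphism of weak bialgebras and $g:D\rightarrow B$ a coalgebra morphism with $g\circ f=id_B$ and $g\circ\mu_D\circ(D\otimes f)=\mu_B\circ(g\otimes B)$; this is denoted $(D,B,f,g)$. *)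

(* A strict braided monoidal category in which every idempotent splits,
   presented in single-sorted ("arrows only") form: one type of morphisms
   [Mor] with domain/codomain maps; composition and tensor product are total
   operations whose laws are only required on composable/typed arguments. *)

Record SBMC := {
  Ob : Type;
  Mor : Type;
  dom : Mor -> Ob;
  cod : Mor -> Ob;
  idm : Ob -> Mor;
  comp : Mor -> Mor -> Mor;           (* comp g f = g o f *)
  ten : Ob -> Ob -> Ob;
  tenm : Mor -> Mor -> Mor;
  unitO : Ob;
  braid : Ob -> Ob -> Mor;
  braidinv : Ob -> Ob -> Mor;

  dom_idm : forall A, dom (idm A) = A;
  cod_idm : forall A, cod (idm A) = A;
  dom_comp : forall f g, cod f = dom g -> dom (comp g f) = dom f;
  cod_comp : forall f g, cod f = dom g -> cod (comp g f) = cod g;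
  comp_idl : forall f, comp (idm (cod f)) f = f;
  comp_idr : forall f, comp f (idm (dom f)) = f;
  comp_assoc : forall f g h, cod f = dom g -> cod g = dom h ->
      comp h (comp g f) = comp (comp h g) f;

  dom_tenm : forall f g, dom (tenm f g) = ten (dom f) (dom g);
  cod_tenm : forall f g, cod (tenm f g) = ten (cod f) (cod g);
  tenm_idm : forall A B, tenm (idm A) (idm B) = idm (ten A B);
  tenm_comp : forall f g f' g', cod f = dom g -> cod f' = dom g' ->
      tenm (comp g f) (comp g' f') = comp (tenm g g') (tenm f f');

  ten_assoc : forall A B C, ten (ten A B) C = ten A (ten B C);
  ten_unitl : forall A, ten unitO A = A;
  ten_unitr : forall A, ten A unitO = A;
  tenm_assoc : forall f g h, tenm (tenm f g) h = tenm f (tenm g h);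
  tenm_unitl : forall f, tenm (idm unitO) f = f;
  tenm_unitr : forall f, tenm f (idm unitO) = f;

  dom_braid : forall A B, dom (braid A B) = ten A B;
  cod_braid : forall A B, cod (braid A B) = ten B A;
  dom_braidinv : forall A B, dom (braidinv A B) = ten B A;
  cod_braidinv : forall A B, cod (braidinv A B) = ten A B;
  braidinv_braid : forall A B, comp (braidinv A B) (braid A B) = idm (ten A B);
  braid_braidinv : forall A B, comp (braid A B) (braidinv A B) = idm (ten B A);
  braid_natural : forall f g,
      comp (braid (cod f) (cod g)) (tenm f g)
      = comp (tenm g f) (braid (dom f) (dom g));
  braid_hex1 : forall A B C,
      braid A (ten B C)
      = comp (tenm (idm B) (braid A C)) (tenm (braid A B) (idm C));
  braid_hex2 : forall A B C,
      braid (ten A B) C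
      = comp (tenm (braid A C) (idm B)) (tenm (idm A) (braid B C));

  idem_split : forall e, dom e = cod e -> comp e e = e ->
      exists (A : Ob) (p i : Mor),
        dom p = dom e /\ cod p = A /\ dom i = A /\ cod i = dom e /\
        comp i p = e /\ comp p i = idm A
}.

Arguments dom {s}. Arguments cod {s}. Arguments idm {s}. Arguments comp {s}.
Arguments ten {s}. Arguments tenm {s}. Arguments unitO {s}.
Arguments braid {s}. Arguments braidinv {s}.

Section Algebra.
Variable C : SBMC.

Definition hom (f : Mor C) (A B : Ob C) : Prop := dom f = A /\ cod f = B.

Definition is_algebra (A : Ob C) (eta mu : Mor C) : Prop :=
  hom eta unitO A /\ hom mu (ten A A) A /\
  comp mu (tenm mu (idm A)) = comp mu (tenm (idm A) mu) /\
  comp mu (tenm eta (idm A)) = idm A /\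
  comp mu (tenm (idm A) eta) = idm A.

Definition is_coalgebra (A : Ob C) (eps delta : Mor C) : Prop :=
  hom eps A unitO /\ hom delta A (ten A A) /\
  comp (tenm delta (idm A)) delta = comp (tenm (idm A) delta) delta /\
  comp (tenm eps (idm A)) delta = idm A /\
  comp (tenm (idm A) eps) delta = idm A.

Definition wedge (mu delta f g : Mor C) : Mor C :=
  comp mu (comp (tenm f g) delta).

Definition is_weak_bialgebra (D : Ob C) (eta mu eps delta : Mor C) : Prop :=
  is_algebra D eta mu /\ is_coalgebra D eps delta /\
  comp delta mu
    = comp (tenm mu mu)
        (comp (tenm (idm D) (tenm (braid D D) (idm D))) (tenm delta delta)) /\
  comp eps (comp mu (tenm mu (idm D)))
    = comp (tenm (comp eps mu) (comp eps mu))
        (tenm (idm D) (tenm delta (idm D))) /\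
  comp eps (comp mu (tenm mu (idm D)))
    = comp (tenm (comp eps mu) (comp eps mu))
        (tenm (idm D) (tenm (comp (braidinv D D) delta) (idm D))) /\
  comp (tenm delta (idm D)) (comp delta eta)
    = comp (tenm (idm D) (tenm mu (idm D)))
        (tenm (comp delta eta) (comp delta eta)) /\
  comp (tenm delta (idm D)) (comp delta eta)
    = comp (tenm (idm D) (tenm (comp mu (braidinv D D)) (idm D)))
        (tenm (comp delta eta) (comp delta eta)).

Definition PiL (D : Ob C) (eta mu eps delta : Mor C) : Mor C :=
  comp (tenm (comp eps mu) (idm D))
    (comp (tenm (idm D) (braid D D)) (tenm (comp delta eta) (idm D))).

Definition PiR (D : Ob C) (eta mu eps delta : Mor C) : Mor C :=
  comp (tenm (idm D) (comp eps mu))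
    (comp (tenm (braid D D) (idm D)) (tenm (idm D) (comp delta eta))).

Definition is_antipode (D : Ob C) (eta mu eps delta lam : Mor C) : Prop :=
  hom lam D D /\
  wedge mu delta (idm D) lam = PiL D eta mu eps delta /\
  wedge mu delta lam (idm D) = PiR D eta mu eps delta /\
  wedge mu delta (wedge mu delta lam (idm D)) lam = lam.

Definition is_weak_hopf (D : Ob C) (eta mu eps delta lam : Mor C) : Prop :=
  is_weak_bialgebra D eta mu eps delta /\ is_antipode D eta mu eps delta lam.

Definition is_algebra_morphism (A A' : Ob C) (eta mu eta' mu' f : Mor C) : Prop :=
  hom f A A' /\ comp f eta = eta' /\ comp f mu = comp mu' (tenm f f).

Definition is_coalgebra_morphism (A A' : Ob C) (eps delta eps' delta' f : Mor C)
  : Prop :=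
  hom f A A' /\ comp eps' f = eps /\ comp delta' f = comp (tenm f f) delta.

Definition is_weak_projection (D B : Ob C)
    (etaD muD epsD deltaD : Mor C) (etaB muB epsB deltaB lamB : Mor C)
    (f g : Mor C) : Prop :=
  is_weak_bialgebra D etaD muD epsD deltaD /\
  is_weak_hopf B etaB muB epsB deltaB lamB /\
  is_algebra_morphism B D etaB muB etaD muD f /\
  is_coalgebra_morphism B D epsB deltaB epsD deltaD f /\
  is_coalgebra_morphism D B epsD deltaD epsB deltaB g /\
  comp g f = idm B /\
  comp g (comp muD (tenm (idm D) f)) = comp muB (tenm g (idm B)).

Definition is_coequalizer (a b p : Mor C) : Prop :=
  comp p a = comp p b /\
  forall h : Mor C, dom h = cod a -> comp h a = comp h b ->
    exists u : Mor C, dom u = cod p /\ cod u = cod h /\ comp u p = h /\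
      forall u' : Mor C, dom u' = cod p -> cod u' = cod h -> comp u' p = h ->
        u' = u.

End Algebra.


(* Write t := phi o w with w := (D (x) (lambda_B o g)) o delta_D.  Two identities of
   the weak projection carry the whole argument: t o phi = t o beta, which uses
   g (x f(b)) = g(x) b together with the weak Hopf identity
   b1 lambda(y b2) = lambda(y1) epsilon(y2 b) in B; and beta o w = id_D, which
   reduces to epsilon_B o Pi^L = epsilon_B.  Then every h with h o phi = h o beta
   satisfies h o t = h o beta o w = h; for h = t this is idempotence, and for a
   splitting t = i o p it shows that h factors through p as (h o i) o p, uniquely
   because p is split epi. *)

Definition whisker {C : SBMC} (X : Ob C) (a : Mor C) (Y : Ob C) : Mor C :=
  tenm (idm X) (tenm a (idm Y)).

Section Typing.
Context {C : SBMC}.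

Lemma hom_comp (f g : Mor C) A M M' B :
  hom C f A M -> hom C g M' B -> M = M' -> hom C (comp g f) A B.
Proof.
  intros [Hf1 Hf2] [Hg1 Hg2] E; subst.
  split; [rewrite dom_comp | rewrite cod_comp]; congruence.
Qed.

Lemma hom_tenm (f g : Mor C) A1 B1 A2 B2 :
  hom C f A1 B1 -> hom C g A2 B2 -> hom C (tenm f g) (ten A1 A2) (ten B1 B2).
Proof.
  intros [Hf1 Hf2] [Hg1 Hg2]; split; [rewrite dom_tenm | rewrite cod_tenm]; congruence.
Qed.

Lemma hom_idm (A : Ob C) : hom C (idm A) A A.
Proof. split; [apply dom_idm | apply cod_idm]. Qed.

Lemma hom_braid (A B : Ob C) : hom C (braid A B) (ten A B) (ten B A).
Proof. split; [apply dom_braid | apply cod_braid]. Qed.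

Lemma hom_braidinv (A B : Ob C) : hom C (braidinv A B) (ten B A) (ten A B).
Proof. split; [apply dom_braidinv | apply cod_braidinv]. Qed.

Lemma hom_eq (f : Mor C) A B A' B' : hom C f A B -> A = A' -> B = B' -> hom C f A' B'.
Proof. intros H -> ->; exact H. Qed.

Lemma hom_whisker (a : Mor C) X P Q Y :
  hom C a P Q -> hom C (whisker X a Y) (ten X (ten P Y)) (ten X (ten Q Y)).
Proof. intros H. apply hom_tenm; [apply hom_idm | apply hom_tenm; [exact H | apply hom_idm]]. Qed.

Lemma hom_composable (f g : Mor C) A M M' B :
  hom C f A M -> hom C g M' B -> M = M' -> cod f = dom g.
Proof. intros [_ Hf] [Hg _] E; congruence. Qed.

Lemma hom_cod (f : Mor C) A B : hom C f A B -> cod f = B.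
Proof. intros [_ H]; exact H. Qed.

Lemma hom_dom (f : Mor C) A B : hom C f A B -> dom f = A.
Proof. intros [H _]; exact H. Qed.

End Typing.

Ltac ob_eq := first [ reflexivity
  | (repeat rewrite ?ten_assoc, ?ten_unitl, ?ten_unitr); reflexivity ].

Ltac solve_hom :=
  lazymatch goal with
  | |- hom _ (comp _ _) _ _ => eapply hom_comp; [solve_hom | solve_hom | ob_eq]
  | |- hom _ (tenm _ _) _ _ =>
      eapply hom_eq; [eapply hom_tenm; [solve_hom | solve_hom] | ob_eq | ob_eq]
  | |- hom _ (idm _) _ _ => eapply hom_eq; [apply hom_idm | ob_eq | ob_eq]
  | |- hom _ (braid _ _) _ _ => eapply hom_eq; [apply hom_braid | ob_eq | ob_eq]
  | |- hom _ (braidinv _ _) _ _ => eapply hom_eq; [apply hom_braidinv | ob_eq | ob_eq]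
  | |- hom _ (whisker _ _ _) _ _ =>
      eapply hom_eq; [eapply hom_whisker; solve_hom | ob_eq | ob_eq]
  | |- hom _ _ _ _ => eapply hom_eq; [eassumption | ob_eq | ob_eq]
  end.

Ltac solve_types :=
  lazymatch goal with
  | |- cod ?f = dom ?g => eapply hom_composable; [solve_hom | solve_hom | ob_eq]
  | |- cod ?f = ?X => eapply hom_cod; solve_hom
  | |- dom ?f = ?X => eapply hom_dom; solve_hom
  | |- hom _ _ _ _ => solve_hom
  | |- _ = _ => ob_eq
  end.

Section Whiskering.
Context {C : SBMC}.
Implicit Types (f g h a b r : Mor C) (X Y M P Q R S : Ob C).

Ltac simpl_types :=
  repeat (rewrite cod_idm || rewrite dom_idm || rewrite cod_tenm || rewrite dom_tenm);
  try congruence.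

Lemma comp_idl_at f X : cod f = X -> comp (idm X) f = f.
Proof. intros <-. apply comp_idl. Qed.

Lemma comp_idr_at f X : dom f = X -> comp f (idm X) = f.
Proof. intros <-. apply comp_idr. Qed.

Lemma comp_idm_idm X : comp (idm X) (idm X) = idm X.
Proof. apply comp_idl_at, cod_idm. Qed.

Lemma comp_assoc_r f g h :
  cod f = dom g -> cod g = dom h -> comp (comp h g) f = comp h (comp g f).
Proof. intros. symmetry. apply comp_assoc; assumption. Qed.

Lemma tenm_factor f g : tenm f g = comp (tenm f (idm (cod g))) (tenm (idm (dom f)) g).
Proof.
  rewrite <- tenm_comp by (rewrite ?cod_idm, ?dom_idm; reflexivity).
  rewrite comp_idl, comp_idr. reflexivity.
Qed.

Lemma whisker_comp X f g Y :
  cod f = dom g -> whisker X (comp g f) Y = comp (whisker X g Y) (whisker X f Y).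
Proof.
  intros E. unfold whisker.
  rewrite <- !tenm_comp by simpl_types. rewrite !comp_idm_idm. reflexivity.
Qed.

Lemma whisker_whisker X X' a Y' Y :
  whisker X (whisker X' a Y') Y = whisker (ten X X') a (ten Y' Y).
Proof. unfold whisker. rewrite !tenm_assoc, <- !tenm_idm, !tenm_assoc. reflexivity. Qed.

Lemma whisker_idm X P Y : whisker X (idm P) Y = idm (ten X (ten P Y)).
Proof. unfold whisker. rewrite !tenm_idm. reflexivity. Qed.

Lemma whisker_tenm X f g Y :
  whisker X (tenm f g) Y =
  comp (whisker X f (ten (cod g) Y)) (whisker (ten X (dom f)) g Y).
Proof.
  rewrite (tenm_factor f g).
  rewrite whisker_comp by (rewrite cod_tenm, dom_tenm, cod_idm, dom_idm; reflexivity).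
  unfold whisker. rewrite <- !tenm_idm, !tenm_assoc. reflexivity.
Qed.

Lemma whisker_unit a : a = whisker unitO a unitO.
Proof. unfold whisker. rewrite tenm_unitl, tenm_unitr. reflexivity. Qed.

Lemma comp_whisker_unit_l a g : comp a g = comp (whisker unitO a unitO) g.
Proof. rewrite <- whisker_unit. reflexivity. Qed.

Lemma comp_whisker_unit_r a g : comp g a = comp g (whisker unitO a unitO).
Proof. rewrite <- whisker_unit. reflexivity. Qed.

Lemma whisker_unit_eq_l a r : whisker unitO a unitO = r -> a = r.
Proof. intros <-; apply whisker_unit. Qed.

Lemma whisker_unit_eq_r a l : l = whisker unitO a unitO -> l = a.
Proof. intros ->; symmetry; apply whisker_unit. Qed.

(* Interchange of a layer [a : P -> Q] applied after a layer [b : R -> S] lying to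
   its right, separated from it by the wires [M]. *)
Lemma whisker_interchange a b P Q R S X1 Y1 X2 Y2 M :
  hom C a P Q -> hom C b R S -> X2 = ten X1 (ten P M) -> Y1 = ten M (ten S Y2) ->
  comp (whisker X1 a Y1) (whisker X2 b Y2) =
  comp (whisker (ten X1 (ten Q M)) b Y2) (whisker X1 a (ten M (ten R Y2))).
Proof.
  intros [Ha1 Ha2] [Hb1 Hb2] -> ->. unfold whisker.
  rewrite <- !tenm_idm, !tenm_assoc, <- !tenm_comp by simpl_types.
  rewrite !comp_idm_idm, comp_idl_at, comp_idr_at, comp_idl_at, comp_idr_at by congruence.
  reflexivity.
Qed.

Lemma whisker_interchange_comp a b P Q R S X1 Y1 X2 Y2 M r :
  hom C a P Q -> hom C b R S -> X2 = ten X1 (ten P M) -> Y1 = ten M (ten S Y2) ->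
  cod r = ten X2 (ten R Y2) ->
  comp (whisker X1 a Y1) (comp (whisker X2 b Y2) r) =
  comp (whisker (ten X1 (ten Q M)) b Y2) (comp (whisker X1 a (ten M (ten R Y2))) r).
Proof.
  intros Ha Hb E1 E2 Er. subst.
  assert (Hr : hom C r (dom r) (ten (ten X1 (ten P M)) (ten R Y2))) by (split; auto).
  rewrite comp_assoc, (whisker_interchange a b P Q R S X1 _ _ Y2 M), <- comp_assoc
    by (solve_types || reflexivity).
  reflexivity.
Qed.

Lemma whisker_interchange_rev a b P Q R S X1 Y1 X2 Y2 M :
  hom C a P Q -> hom C b R S -> X1 = ten X2 (ten S M) -> Y2 = ten M (ten P Y1) ->
  comp (whisker X1 a Y1) (whisker X2 b Y2) =
  comp (whisker X2 b (ten M (ten Q Y1))) (whisker (ten X2 (ten R M)) a Y1).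
Proof.
  intros Ha Hb -> ->. symmetry.
  apply (whisker_interchange b a R S P Q X2 (ten M (ten Q Y1)) (ten X2 (ten R M)) Y1 M);
    auto || reflexivity.
Qed.

Lemma whisker_interchange_rev_comp a b P Q R S X1 Y1 X2 Y2 M r :
  hom C a P Q -> hom C b R S -> X1 = ten X2 (ten S M) -> Y2 = ten M (ten P Y1) ->
  cod r = ten X2 (ten R Y2) ->
  comp (whisker X1 a Y1) (comp (whisker X2 b Y2) r) =
  comp (whisker X2 b (ten M (ten Q Y1))) (comp (whisker (ten X2 (ten R M)) a Y1) r).
Proof.
  intros Ha Hb E1 E2 Er. subst.
  assert (Hr : hom C r (dom r) (ten X2 (ten R (ten M (ten P Y1))))) by (split; auto).
  rewrite comp_assoc, (whisker_interchange_rev a b P Q R S _ Y1 X2 _ M), <- comp_assoc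
    by (solve_types || reflexivity).
  reflexivity.
Qed.

End Whiskering.

Ltac type_of_mor e :=
  lazymatch e with
  | comp ?g ?f =>
      let p := type_of_mor f in let q := type_of_mor g in
      lazymatch p with (?A, _) => lazymatch q with (_, ?B) => constr:((A, B)) end end
  | tenm ?f ?g =>
      let p := type_of_mor f in let q := type_of_mor g in
      lazymatch p with (?A1, ?B1) => lazymatch q with (?A2, ?B2) =>
        constr:((ten A1 A2, ten B1 B2)) end end
  | idm ?X => constr:((X, X))
  | braid ?X ?Y => constr:((ten X Y, ten Y X))
  | braidinv ?X ?Y => constr:((ten Y X, ten X Y))
  | whisker ?X ?a ?Y =>
      let p := type_of_mor a in
      lazymatch p with (?P, ?Q) => constr:((ten X (ten P Y), ten X (ten Q Y))) end
  | _ => lazymatch goal with H : hom _ e ?A ?B |- _ => constr:((A, B)) end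
  end.

Ltac ob_width X :=
  lazymatch X with
  | @unitO _ => constr:(0)
  | @ten _ ?a ?b => let n := ob_width a in let m := ob_width b in constr:(n + m)
  | _ => constr:(1)
  end.

Ltac ob_width_nat X := let n := ob_width X in eval compute in n.

Ltac ob_drop n X :=
  lazymatch n with
  | 0 => X
  | S ?n' => lazymatch X with
            | @ten _ _ ?b => ob_drop n' b
            | _ => lazymatch type of X with Ob ?C => constr:(@unitO C) end
            end
  end.

Ltac ob_take n X :=
  lazymatch n with
  | 0 => lazymatch type of X with Ob ?C => constr:(@unitO C) end
  | S ?n' => lazymatch X with
            | @ten ?C ?a ?b => let r := ob_take n' b in constr:(@ten C a r)
            | _ => X
            end
  end.

Ltac is_generator x :=
  lazymatch x with
  | whisker _ _ _ => fail
  | comp _ _ => fail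
  | idm _ => fail
  | _ => idtac
  end.

Ltac ob_norm_step := first [rewrite ten_assoc | rewrite ten_unitl | rewrite ten_unitr].
Ltac ob_norm := repeat ob_norm_step.

Ltac rewrite_dom_cod :=
  match goal with
  | |- context [cod ?g] => let p := type_of_mor g in
        lazymatch p with (?A, ?B) => rewrite (hom_cod g A B) by solve_hom end
  | |- context [dom ?g] => let p := type_of_mor g in
        lazymatch p with (?A, ?B) => rewrite (hom_dom g A B) by solve_hom end
  end.

Ltac wrap_generator :=
  match goal with
  | |- context [comp ?x ?y] => is_generator x; rewrite (comp_whisker_unit_l x y)
  | |- context [comp ?x ?y] => is_generator y; rewrite (comp_whisker_unit_r y x)
  | |- ?l = _ => is_generator l; apply whisker_unit_eq_l
  | |- _ = ?r => is_generator r; apply whisker_unit_eq_r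
  end.

Ltac interchange_step :=
  match goal with
  | |- context [comp (whisker ?X1 ?a ?Y1) (comp (whisker ?X2 ?b ?Y2) ?r)] =>
      let pa := type_of_mor a in let pb := type_of_mor b in
      lazymatch pa with (?P, ?Q) => lazymatch pb with (?R, ?S) =>
      let x1 := ob_width_nat X1 in let p := ob_width_nat P in
      let x2 := ob_width_nat X2 in let s := ob_width_nat S in
      let c := eval compute in (andb (Nat.leb (x1 + p) x2) (Nat.ltb x1 (x2 + s))) in
      lazymatch c with true =>
        let k := eval compute in (x1 + p) in
        let M := ob_drop k X2 in
        rewrite (whisker_interchange_comp a b P Q R S X1 Y1 X2 Y2 M r) by solve_types
      end end end
  | |- context [comp (whisker ?X1 ?a ?Y1) (whisker ?X2 ?b ?Y2)] =>
      let pa := type_of_mor a in let pb := type_of_mor b in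
      lazymatch pa with (?P, ?Q) => lazymatch pb with (?R, ?S) =>
      let x1 := ob_width_nat X1 in let p := ob_width_nat P in
      let x2 := ob_width_nat X2 in let s := ob_width_nat S in
      let c := eval compute in (andb (Nat.leb (x1 + p) x2) (Nat.ltb x1 (x2 + s))) in
      lazymatch c with true =>
        let k := eval compute in (x1 + p) in
        let M := ob_drop k X2 in
        rewrite (whisker_interchange a b P Q R S X1 Y1 X2 Y2 M) by solve_types
      end end end
  end.

(* [nf] puts both sides in normal form: a right-nested composite of layers
   [whisker X a Y] with [a] a generator, objects right-associated without unit,
   and of two adjacent commuting layers the one further left applied first. *)
Ltac nf_step :=
  first [ rewrite comp_assoc_r by solve_types
        | rewrite whisker_whisker
        | rewrite whisker_idm
        | rewrite whisker_comp by solve_types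
        | rewrite whisker_tenm
        | rewrite_dom_cod
        | rewrite comp_idl_at by solve_types
        | rewrite comp_idr_at by solve_types
        | ob_norm_step
        | wrap_generator
        | interchange_step ].

Ltac nf := repeat nf_step.
Ltac nf_eq := nf; reflexivity.

Ltac nth_suffix k W :=
  lazymatch k with
  | 0 => W
  | S ?k' => lazymatch W with comp _ ?r => nth_suffix k' r end
  end.

Ltac drop_layers n W :=
  lazymatch n with
  | 0 => W
  | S ?n' => lazymatch W with comp _ ?r => drop_layers n' r | _ => constr:(tt) end
  end.

Ltac swap_pair T :=
  lazymatch T with
  | comp (whisker ?X1 ?a ?Y1) ?T' =>
    let pa := type_of_mor a in lazymatch pa with (?P, ?Q) =>
    let x1 := ob_width_nat X1 in let p := ob_width_nat P in
    lazymatch T' with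
    | comp (whisker ?X2 ?b ?Y2) ?r =>
      let pb := type_of_mor b in lazymatch pb with (?R, ?S) =>
      let x2 := ob_width_nat X2 in let s := ob_width_nat S in
      let cL := eval compute in (Nat.leb (x1 + p) x2) in
      let cR := eval compute in (Nat.leb (x2 + s) x1) in
      lazymatch cL with
      | true => let k := eval compute in (x1 + p) in let M := ob_drop k X2 in
          rewrite (whisker_interchange_comp a b P Q R S X1 Y1 X2 Y2 M r) by solve_types
      | false => lazymatch cR with
        | true => let k := eval compute in (x2 + s) in let M := ob_drop k X1 in
          rewrite (whisker_interchange_rev_comp a b P Q R S X1 Y1 X2 Y2 M r)
            by solve_types
        end end end
    | whisker ?X2 ?b ?Y2 =>
      let pb := type_of_mor b in lazymatch pb with (?R, ?S) =>
      let x2 := ob_width_nat X2 in let s := ob_width_nat S in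
      let cL := eval compute in (Nat.leb (x1 + p) x2) in
      let cR := eval compute in (Nat.leb (x2 + s) x1) in
      lazymatch cL with
      | true => let k := eval compute in (x1 + p) in let M := ob_drop k X2 in
          rewrite (whisker_interchange a b P Q R S X1 Y1 X2 Y2 M) by solve_types
      | false => lazymatch cR with
        | true => let k := eval compute in (x2 + s) in let M := ob_drop k X1 in
          rewrite (whisker_interchange_rev a b P Q R S X1 Y1 X2 Y2 M) by solve_types
        end end end
    end end
  end.

(* Layers of the left-hand side are numbered from 0, outermost first. *)
Ltac swap_at i :=
  lazymatch goal with |- ?L = _ => let T := nth_suffix i L in swap_pair T end; ob_norm.

Ltac pull j k :=
  lazymatch eval compute in (Nat.ltb k j) with
  | true => let j' := eval compute in (pred j) in swap_at j'; pull j' k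
  | false => idtac
  end.

Ltac push k j :=
  lazymatch eval compute in (Nat.ltb k j) with
  | true => swap_at k; let k' := eval compute in (S k) in push k' j
  | false => idtac
  end.

(* [rw_layers H wl wr k n] rewrites with [H : P = Q] the [n] layers of the
   left-hand side starting at layer [k], read as [P] whiskered by the first [wl]
   wires on the left and the last [wr] wires on the right of layer [k]. *)
Ltac rw_layers H wl wr k n :=
  lazymatch type of H with ?P = ?Q =>
  lazymatch goal with |- ?L = _ =>
    let T := nth_suffix k L in
    let l := lazymatch T with comp ?l _ => l | _ => T end in
    lazymatch l with whisker ?Xk _ ?Yk =>
      let X := ob_take wl Xk in
      let yw := ob_width_nat Yk in let m := eval compute in (yw - wr) in
      let Y := ob_drop m Yk in
      let rest := drop_layers n T in
      let E := fresh "E" in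
      lazymatch rest with
      | tt => assert (E : T = whisker X Q Y)
          by (transitivity (whisker X P Y);
              [nf_eq | apply (f_equal (fun z => whisker X z Y)); exact H])
      | _ => assert (E : T = comp (whisker X Q Y) rest)
          by (transitivity (comp (whisker X P Y) rest);
              [nf_eq | apply (f_equal (fun z => comp (whisker X z Y) rest)); exact H])
      end; rewrite E; clear E
    end end end.

Ltac rw_layers_rhs H wl wr k n := symmetry; rw_layers H wl wr k n; symmetry.

(* [insert_id H X Y k] for [H : P = idm Z] inserts [whisker X P Y] as a new layer [k]. *)
Ltac insert_id H X Y k :=
  lazymatch type of H with ?P = idm ?Z =>
  lazymatch goal with |- ?L = _ =>
    let T := nth_suffix k L in
    let E := fresh "E" in
    assert (E : T = comp (whisker X P Y) T)
      by (transitivity (comp (whisker X (idm Z) Y) T);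
          [nf_eq | apply (f_equal (fun z => comp (whisker X z Y) T)); symmetry; exact H]);
    rewrite E; clear E
  end end.

Section Braiding.
Context {C : SBMC}.
Implicit Types (f d e m u : Mor C) (X P Q R : Ob C).

Lemma braid_unit_r X : braid X unitO = idm X.
Proof.
  assert (H := braid_hex1 C X unitO unitO).
  rewrite ten_unitl, tenm_unitl, tenm_unitr in H.
  transitivity (comp (braidinv X unitO) (comp (braid X unitO) (braid X unitO))).
  - rewrite comp_assoc, braidinv_braid, comp_idl_at by
      (rewrite ?cod_braid, ?dom_braid, ?dom_braidinv, ?ten_unitl, ?ten_unitr; reflexivity).
    reflexivity.
  - rewrite <- H, braidinv_braid, ten_unitr. reflexivity.
Qed.

Lemma braid_unit_l X : braid unitO X = idm X.
Proof.
  assert (H := braid_hex2 C unitO unitO X).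
  rewrite ten_unitl, tenm_unitl, tenm_unitr in H.
  transitivity (comp (braidinv unitO X) (comp (braid unitO X) (braid unitO X))).
  - rewrite comp_assoc, braidinv_braid, comp_idl_at by
      (rewrite ?cod_braid, ?dom_braid, ?dom_braidinv, ?ten_unitl, ?ten_unitr; reflexivity).
    reflexivity.
  - rewrite <- H, braidinv_braid, ten_unitl. reflexivity.
Qed.

Lemma braid_natural_r f X P R : hom C f P R ->
  comp (braid X R) (tenm (idm X) f) = comp (tenm f (idm X)) (braid X P).
Proof.
  intros [H1 H2]. assert (H := braid_natural C (idm X) f).
  rewrite cod_idm, H2, dom_idm, H1 in H. exact H.
Qed.

Lemma braid_natural_l f X P R : hom C f P R ->
  comp (braid R X) (tenm f (idm X)) = comp (tenm (idm X) f) (braid P X).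
Proof.
  intros [H1 H2]. assert (H := braid_natural C f (idm X)).
  rewrite cod_idm, H2, dom_idm, H1 in H. exact H.
Qed.

Lemma braid_costate_l e P X : hom C e P unitO ->
  comp (tenm (idm X) e) (braid P X) = tenm e (idm X).
Proof.
  intros He. rewrite <- (braid_natural_l e X P unitO He), braid_unit_l.
  apply comp_idl_at. destruct He as [_ He]. rewrite cod_tenm, cod_idm, He, ten_unitl.
  reflexivity.
Qed.

Lemma braid_costate_r e P X : hom C e P unitO ->
  comp (tenm e (idm X)) (braid X P) = tenm (idm X) e.
Proof.
  intros He. rewrite <- (braid_natural_r e X P unitO He), braid_unit_r.
  apply comp_idl_at. destruct He as [_ He]. rewrite cod_tenm, cod_idm, He, ten_unitr.
  reflexivity.
Qed.

Lemma braid_state_r u P X : hom C u unitO P ->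
  comp (braid X P) (tenm (idm X) u) = tenm u (idm X).
Proof.
  intros Hu. rewrite (braid_natural_r u X unitO P Hu), braid_unit_r.
  apply comp_idr_at. destruct Hu as [Hu _]. rewrite dom_tenm, dom_idm, Hu, ten_unitl.
  reflexivity.
Qed.

Lemma braid_natural_r_ten_dom m X P Q R : hom C m (ten P Q) R ->
  comp (braid X R) (tenm (idm X) m) =
  comp (tenm m (idm X)) (comp (tenm (idm P) (braid X Q)) (tenm (braid X P) (idm Q))).
Proof. intros Hm. rewrite (braid_natural_r m X _ R Hm), braid_hex1. reflexivity. Qed.

Lemma braid_natural_r_ten_cod d X P Q R : hom C d R (ten P Q) ->
  comp (tenm d (idm X)) (braid X R) =
  comp (comp (tenm (idm P) (braid X Q)) (tenm (braid X P) (idm Q))) (tenm (idm X) d).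
Proof. intros Hd. rewrite <- (braid_natural_r d X R _ Hd), braid_hex1. reflexivity. Qed.

Lemma braid_natural_l_ten_dom m X P Q R : hom C m (ten P Q) R ->
  comp (braid R X) (tenm m (idm X)) =
  comp (tenm (idm X) m) (comp (tenm (braid P X) (idm Q)) (tenm (idm P) (braid Q X))).
Proof. intros Hm. rewrite (braid_natural_l m X _ R Hm), braid_hex2. reflexivity. Qed.

Lemma braid_natural_l_ten_cod d X P Q R : hom C d R (ten P Q) ->
  comp (tenm (idm X) d) (braid R X) =
  comp (comp (tenm (braid P X) (idm Q)) (tenm (idm P) (braid Q X))) (tenm d (idm X)).
Proof. intros Hd. rewrite <- braid_hex2. symmetry. apply braid_natural_l. exact Hd. Qed.

Lemma braid_costate_ten_r e X P Q : hom C e (ten P Q) unitO ->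
  comp (tenm e (idm X)) (comp (tenm (idm P) (braid X Q)) (tenm (braid X P) (idm Q))) =
  tenm (idm X) e.
Proof. intros He. rewrite <- braid_hex1. apply braid_costate_r. exact He. Qed.

Lemma braid_state_ten_r u X P Q : hom C u unitO (ten P Q) ->
  comp (comp (tenm (idm P) (braid X Q)) (tenm (braid X P) (idm Q))) (tenm (idm X) u) =
  tenm u (idm X).
Proof. intros Hu. rewrite <- braid_hex1. apply braid_state_r. exact Hu. Qed.

End Braiding.

Section WeakHopf.
Context {C : SBMC}.
Context {A : Ob C} {eta mu eps delta lam : Mor C}.

Lemma counit_PiL :
  is_algebra C A eta mu -> is_coalgebra C A eps delta ->
  comp eps (PiL C A eta mu eps delta) = eps.
Proof.
  intros [Heta [Hmu [_ [Hul _]]]] [Heps [Hdelta [_ [_ Hcur]]]].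
  unfold PiL. nf. push 0 2.
  rw_layers (braid_costate_l eps A A Heps) 1 0 2 2. nf.
  rw_layers Hcur 0 1 2 2. nf.
  rw_layers Hul 0 0 1 2. nf_eq.
Qed.

Lemma PiL_mul :
  is_weak_bialgebra C A eta mu eps delta ->
  comp (tenm (PiL C A eta mu eps delta) (comp eps mu)) (tenm delta (idm A)) =
  comp (PiL C A eta mu eps delta) mu.
Proof.
  intros [[Heta [Hmu [Hass _]]] [[Heps [Hdelta _]] [_ [He1 _]]]].
  assert (Hepsmu : hom C (comp eps mu) (ten A A) unitO) by solve_hom.
  symmetry. unfold PiL. nf.
  rw_layers (braid_natural_r_ten_dom mu A A A A Hmu) 1 0 2 2. nf.
  rw_layers (eq_sym Hass) 0 1 1 2. nf. pull 3 2.
  rw_layers He1 0 1 0 3. nf.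
  rw_layers (braid_natural_r_ten_cod delta A A A A Hdelta) 1 1 5 2. nf.
  rw_layers (braid_costate_ten_r (comp eps mu) A A A Hepsmu) 0 0 0 4. nf_eq.
Qed.

Lemma coprod_unit_mul :
  is_weak_bialgebra C A eta mu eps delta ->
  comp (tenm mu mu)
    (comp (tenm (idm A) (tenm (braid A A) (idm A))) (tenm (comp delta eta) delta))
  = delta.
Proof.
  intros [[Heta [Hmu [_ [Hul _]]]] [[Heps [Hdelta _]] [Hdm _]]].
  nf. rw_layers (eq_sym Hdm) 0 0 0 5. nf.
  rw_layers Hul 0 0 1 2. nf_eq.
Qed.

Lemma PiR_coprod :
  is_weak_bialgebra C A eta mu eps delta ->
  comp (tenm (PiR C A eta mu eps delta) (idm A)) delta =
  comp (tenm (idm A) mu) (comp (tenm (braid A A) (idm A)) (tenm (idm A) (comp delta eta))).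
Proof.
  intros [[Heta [Hmu [Hass [_ Hur]]]]
          [[Heps [Hdelta [Hcoass [Hcul _]]]] [Hdm [_ [_ [_ Hu2]]]]]].
  assert (Hunit3 : comp (tenm (idm A) delta) (comp delta eta) =
    comp (tenm (idm A) (tenm (comp mu (braidinv A A)) (idm A)))
      (tenm (comp delta eta) (comp delta eta))).
  { rewrite <- Hu2, comp_assoc, <- Hcoass, <- comp_assoc by solve_types. reflexivity. }
  assert (Hmu' : hom C (comp mu (braidinv A A)) (ten A A) A) by solve_hom.
  assert (Hunit : hom C (comp delta eta) unitO (ten A A)) by solve_hom.
  symmetry. unfold PiR. nf.
  insert_id Hcul A (@unitO C) 0. nf.
  rw_layers Hdm 1 0 1 2. nf. push 4 6.
  rw_layers Hunit3 1 0 6 3. nf.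
  rw_layers (braid_natural_r_ten_dom _ A A A A Hmu') 2 1 3 3. nf.
  rw_layers (braid_natural_l_ten_cod delta A A A A Hdelta) 0 1 9 2. nf.
  swap_at 8. rw_layers (braid_state_ten_r _ A A A Hunit) 1 0 9 4. nf.
  push 7 10. push 6 9. push 5 8.
  rw_layers (eq_sym (braid_state_ten_r _ A A A Hunit)) 1 2 6 2. nf.
  rw_layers (braidinv_braid C A A) 2 2 4 2. nf.
  rw_layers (eq_sym Hass) 1 2 2 2. nf.
  rw_layers (eq_sym (braid_natural_l_ten_dom mu A A A A Hmu)) 0 3 3 3. nf.
  push 0 5. swap_at 9. rw_layers (eq_sym Hdm) 0 0 5 5. nf.
  rw_layers Hur 0 0 6 2. nf_eq.
Qed.

Lemma counit_id_wedge_antipode :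
  is_weak_hopf C A eta mu eps delta lam ->
  comp eps (wedge C mu delta (idm A) lam) = eps.
Proof. intros [[Halg [Hcoalg _]] [_ [Hwl _]]]. rewrite Hwl. exact (counit_PiL Halg Hcoalg). Qed.

Lemma antipode_PiL :
  is_weak_hopf C A eta mu eps delta lam ->
  wedge C mu delta lam (PiL C A eta mu eps delta) = lam.
Proof.
  intros [[[_ [Hmu [Hass _]]] [[_ [Hdelta [Hcoass _]]] _]] [Hlam [Hwl [_ Hwlam]]]].
  rewrite <- Hwl. transitivity (wedge C mu delta (wedge C mu delta lam (idm A)) lam);
    [symmetry | exact Hwlam].
  unfold wedge. nf.
  rw_layers Hcoass 0 0 4 2. nf. push 1 2.
  rw_layers Hass 0 0 0 2. nf_eq.
Qed.

(* Insert lambda = lambda * Pi^L,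
   absorb epsilon(x_3 y) with [PiL_mul], expand Pi^L = id * lambda, recognise
   lambda(x_1) x_2 = Pi^R(x_1) and conclude with [PiR_coprod] and
   [coprod_unit_mul]. *)
Lemma antipode_counit_mul :
  is_weak_hopf C A eta mu eps delta lam ->
  comp (tenm lam (comp eps mu)) (tenm delta (idm A)) =
  comp mu (comp (tenm (idm A) (comp lam mu))
    (comp (tenm (braid A A) (idm A)) (tenm (idm A) delta))).
Proof.
  intros HH. pose proof HH as [HW [Hlam [Hwl [Hwr _]]]].
  pose proof HW as [[Heta [Hmu [Hass _]]] [[Heps [Hdelta [Hcoass _]]] [Hdm _]]].
  assert (HPL : hom C (PiL C A eta mu eps delta) A A) by (unfold PiL; solve_hom).
  assert (HPR : hom C (PiR C A eta mu eps delta) A A) by (unfold PiR; solve_hom).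
  assert (Hlam_PiL : lam = comp mu (comp (tenm lam (PiL C A eta mu eps delta)) delta))
    by exact (eq_sym (antipode_PiL HH)).
  assert (HPiL : PiL C A eta mu eps delta = comp mu (comp (tenm (idm A) lam) delta))
    by (rewrite <- Hwl; reflexivity).
  assert (HPiR : comp mu (comp (tenm lam (idm A)) delta) = PiR C A eta mu eps delta)
    by (rewrite <- Hwr; reflexivity).
  nf. rw_layers Hlam_PiL 0 2 2 1. nf.
  rw_layers Hcoass 0 1 5 2. nf. pull 2 0.
  rw_layers (PiL_mul HW) 1 0 1 4. nf.
  rw_layers HPiL 1 0 1 1. nf.
  rw_layers Hdm 1 0 3 2. nf.
  rw_layers (eq_sym Hass) 0 0 0 2. nf.
  rw_layers (eq_sym Hass) 0 2 3 2. nf.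
  swap_at 7. rw_layers (eq_sym Hcoass) 0 1 8 2. nf.
  rw_layers HPiR 0 2 6 3. nf.
  rw_layers (PiR_coprod HW) 0 1 6 2. nf. pull 6 5.
  rw_layers (braid_natural_l_ten_dom mu A A A A Hmu) 1 1 4 2. nf. pull 8 6.
  rw_layers (eq_sym (braid_natural_r_ten_dom mu A A A A Hmu)) 0 2 4 3. nf.
  rw_layers Hass 1 0 2 2. nf. pull 4 3.
  rw_layers (coprod_unit_mul HW) 1 0 4 6. nf_eq.
Qed.

End WeakHopf.

Section WeakProjection.
Context {C : SBMC}.
Context {D B : Ob C} {etaD muD epsD deltaD etaB muB epsB deltaB lamB f g : Mor C}.
Hypothesis Hproj :
  is_weak_projection C D B etaD muD epsD deltaD etaB muB epsB deltaB lamB f g.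

Local Notation phiD := (comp muD (tenm (idm D) f)).
Local Notation wD := (comp (tenm (idm D) (comp lamB g)) deltaD).
Local Notation betaD := (comp (tenm (idm D) (comp epsD phiD)) (tenm deltaD (idm B))).

Lemma weak_projection_hom :
  hom C phiD (ten D B) D /\ hom C betaD (ten D B) D /\ hom C wD D (ten D B).
Proof.
  destruct Hproj as [[[_ [HmuD _]] [[HepsD [HdeltaD _]] _]]
                     [[_ [HlamB _]] [[Hf _] [_ [[Hg _] _]]]]].
  split; [| split]; solve_hom.
Qed.

(* t(x f(b)) = x_1 f(b_1 lambda(g(x_2) b_2)) since g(x f(b)) = g(x) b, and
   [antipode_counit_mul] rewrites b_1 lambda(y b_2) as lambda(y_1) epsilon(y_2 b). *)
Lemma weak_projection_coequalizes :
  comp (comp phiD wD) phiD = comp (comp phiD wD) betaD.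
Proof.
  destruct Hproj as [[[_ [HmuD [HassD _]]] [[HepsD [HdeltaD [HcoassD _]]] [HdmD _]]]
    [HH [[Hf [_ Hfmu]] [[_ [_ Hfdelta]] [[Hg [Hgeps Hgdelta]] [_ Hgmu]]]]]].
  pose proof HH as [[[_ [HmuB _]] [[HepsB [HdeltaB _]] _]] [HlamB _]].
  pose proof (antipode_counit_mul HH) as HKEY.
  nf. rw_layers HdmD 0 0 4 2. nf.
  rw_layers Hfdelta 2 0 7 2. nf.
  rw_layers (braid_natural_r f D B D Hf) 1 1 7 2. nf.
  rw_layers Hgmu 1 0 3 3. nf. pull 5 1.
  rw_layers HassD 0 0 0 2. nf. pull 6 3.
  rw_layers (eq_sym Hfmu) 1 0 1 3. nf.
  rw_layers (eq_sym (braid_natural_l g B D B Hg)) 1 1 5 2. nf.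
  rw_layers (eq_sym HKEY) 1 0 2 5. nf.
  rw_layers_rhs (eq_sym Hgeps) 1 0 0 1. nf.
  rw_layers_rhs Hgmu 1 0 1 3. nf.
  rw_layers_rhs HcoassD 0 1 7 2. nf.
  symmetry. push 2 5. symmetry.
  rw_layers_rhs (eq_sym Hgdelta) 1 1 5 3. nf_eq.
Qed.

(* beta(w(x)) = x_1 epsilon_B(g(x_2) lambda(g(x_3))) = x_1 epsilon_B(g(x_2)) = x. *)
Lemma weak_projection_section : comp betaD wD = idm D.
Proof.
  destruct Hproj as [[[_ [HmuD _]] [[HepsD [HdeltaD [HcoassD [_ HcurD]]]] _]]
    [HH [[Hf _] [_ [[Hg [Hgeps Hgdelta]] [_ Hgmu]]]]]].
  pose proof HH as [[[_ [HmuB _]] [[HepsB [HdeltaB _]] _]] [HlamB _]].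
  pose proof (counit_id_wedge_antipode HH) as HePi. unfold wedge in HePi.
  nf. rw_layers (eq_sym Hgeps) 1 0 0 1. nf.
  rw_layers Hgmu 1 0 1 3. nf.
  rw_layers HcoassD 0 0 5 2. nf.
  rw_layers (eq_sym Hgdelta) 1 0 3 3. nf.
  rw_layers HePi 1 0 0 4. nf.
  rw_layers Hgeps 1 0 0 2. nf.
  rw_layers HcurD 0 0 0 2. nf_eq.
Qed.

End WeakProjection.

Section SplitCoequalizer.
Context {C : SBMC}.
Context {X Y : Ob C} {phi beta w : Mor C}.
Hypotheses (Hphi : hom C phi Y X) (Hbeta : hom C beta Y X) (Hw : hom C w X Y).
Hypothesis Hcoeq : comp (comp phi w) phi = comp (comp phi w) beta.
Hypothesis Hsection : comp beta w = idm X.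

Lemma coequalizing_fixes (h : Mor C) :
  dom h = X -> comp h phi = comp h beta -> comp h (comp phi w) = h.
Proof.
  intros Hh E. assert (Hh' : hom C h X (cod h)) by (split; [exact Hh | reflexivity]).
  rewrite comp_assoc, E, <- comp_assoc, Hsection by solve_types.
  apply comp_idr_at. exact Hh.
Qed.

Lemma split_idempotent_coequalizer :
  comp (comp phi w) (comp phi w) = comp phi w /\
  forall (Z : Ob C) (p i : Mor C),
    hom C p X Z -> hom C i Z X -> comp phi w = comp i p -> comp p i = idm Z ->
    is_coequalizer C phi beta p.
Proof.
  split.
  - apply coequalizing_fixes; [solve_types | exact Hcoeq].
  - intros Z p i Hp Hi Ht Hpi.
    pose proof Hp as [Hp_dom Hp_cod]. pose proof Hi as [Hi_dom Hi_cod].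
    assert (Hpt : comp p (comp phi w) = p).
    { rewrite Ht, comp_assoc, Hpi by solve_types. apply comp_idl_at. solve_types. }
    split.
    + rewrite <- Hpt, <- (comp_assoc C phi (comp phi w) p),
        <- (comp_assoc C beta (comp phi w) p), Hcoeq by solve_types.
      reflexivity.
    + intros h Hh E.
      assert (Hh' : hom C h X (cod h)) by (split; [rewrite Hh; solve_types | reflexivity]).
      exists (comp h i). repeat split.
      * rewrite dom_comp by solve_types. congruence.
      * rewrite cod_comp by solve_types. reflexivity.
      * rewrite <- comp_assoc, <- Ht by solve_types. apply coequalizing_fixes; [apply Hh' | exact E].
      * intros u Hu1 Hu2 <-.
        rewrite <- comp_assoc, Hpi by congruence.
        symmetry. apply comp_idr_at. congruence.
Qed.

End SplitCoequalizer.

Theorem proposition3p4 (C : SBMC) (D B : Ob C)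
    (etaD muD epsD deltaD : Mor C) (etaB muB epsB deltaB lamB : Mor C)
    (f g : Mor C) :
  is_weak_projection C D B etaD muD epsD deltaD etaB muB epsB deltaB lamB f g ->
  let phiD := comp muD (tenm (idm D) f) in
  let tBD := comp phiD (comp (tenm (idm D) (comp lamB g)) deltaD) in
  let betaD := comp (tenm (idm D) (comp epsD phiD)) (tenm deltaD (idm B)) in
  comp tBD tBD = tBD /\
  forall (DB : Ob C) (p i : Mor C),
    hom C p D DB -> hom C i DB D ->
    tBD = comp i p -> comp p i = idm DB ->
    is_coequalizer C phiD betaD p.
Proof.
  intros Hproj phiD tBD betaD.
  destruct (weak_projection_hom Hproj) as [Hphi [Hbeta Hw]].
  exact (split_idempotent_coequalizer Hphi Hbeta Hw
    (weak_projection_coequalizes Hproj) (weak_projection_section Hproj)).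
Qed.
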